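(* The functions $D,d:\mathbb{C}^{n\times r}\times\mathbb{C}^{n\times r}\to\mathbb{R}$ defined by $D(x,y)=\min_{U\in U(r)}\|x-yU\|_2$ and $d(x,y)=\min_{U\in U(r)}\|x-yU\|_2\|x+yU\|_2$ descend to metrics on $\mathbb{C}^{n\times r}/U(r)$.
   Context: $\|\cdot\|_2$ is the Frobenius norm, $U(r)$ the unitary group. $\mathbb{C}^{n\times r}/U(r)$ is the set of classes under $x\sim y$ iff $x=yU$ for some $U\in U(r)$. Equivalently $D(x,y)=\sqrt{\|x\|_2^2+\|y\|_2^2-2\|x^*y\|_1}$ and $d(x,y)=\sqrt{(\|x\|_2^2+\|y\|_2^2)^2-4\|x^*y\|_1^2}$, $\|\cdot\|_1$ the nuclear norm. *)

From HB Require Import structures.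
From mathcomp Require Import all_boot all_order all_algebra.
From mathcomp Require Import complex.
From mathcomp Require Import classical_sets reals.
Set Implicit Arguments.
Unset Strict Implicit.
Unset Printing Implicit Defensive.
Import Order.TTheory GRing.Theory Num.Theory.
Local Open Scope ring_scope.
Local Open Scope classical_set_scope.

Definition adjmx (R : realType) m n (A : 'M[R[i]]_(m, n)) : 'M[R[i]]_(n, m) :=
  (map_mx (@conjc R) A)^T.

Definition unitary (R : realType) r (U : 'M[R[i]]_r) : Prop :=
  adjmx U *m U = 1%:M /\ U *m adjmx U = 1%:M.

Definition frob (R : realType) m n (A : 'M[R[i]]_(m, n)) : R :=
  Num.sqrt (\sum_(i < m) \sum_(j < n) (@complex.Re R (A i j) ^+ 2 + @complex.Im R (A i j) ^+ 2)).

Definition uequiv (R : realType) n r (x y : 'M[R[i]]_(n, r)) : Prop :=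
  exists U : 'M[R[i]]_r, unitary U /\ x = y *m U.

(* D(x,y) = min_{U in U(r)} ||x - yU||_2  (defined as the infimum;
   attainment is part of the theorem). *)
Definition Dist (R : realType) n r (x y : 'M[R[i]]_(n, r)) : R :=
  inf [set frob (x - y *m U) | U in [set U : 'M[R[i]]_r | unitary U]].

Definition dist (R : realType) n r (x y : 'M[R[i]]_(n, r)) : R :=
  inf [set frob (x - y *m U) * frob (x + y *m U)
      | U in [set U : 'M[R[i]]_r | unitary U]].

Definition descends_to_metric (R : realType) (X : Type) (eqv : X -> X -> Prop)
  (f : X -> X -> R) : Prop :=
  [/\ (forall x x' y y', eqv x x' -> eqv y y' -> f x y = f x' y'),
      (forall x y, 0 <= f x y),
      (forall x y, f x y = 0 <-> eqv x y),
      (forall x y, f x y = f y x) &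
      (forall x y z, f x z <= f x y + f y z)].

(* Write <a, b> = Re tr (a^* b) for the real inner product behind the Frobenius
   norm.  Then ||x - yU||^2 = ||x||^2 + ||y||^2 - 2 <x, yU> and
   ||x - yU||^2 ||x + yU||^2 = (||x||^2 + ||y||^2)^2 - 4 <x, yU>^2, so a maximiser U0
   of <x, yU> over the compact group U(r) minimises both costs (as -U0 is unitary too).
   An infimum over the orbit of a cost that is unitarily invariant, symmetric,
   subadditive and vanishing exactly on orbits descends to a metric on the quotient.
   For ||a - b|| ||a + b|| subadditivity is the Ptolemy-type inequality
   ||x - z|| ||x + z|| <= ||x - y|| ||x + y|| + ||y - z|| ||y + z||, true in any real
   inner product space: for a reflection H with <x - z, H (x + z)> = ||x - z|| ||x + z||
   and f a = <a, H a>, one has <a - b, H (a + b)> = f a - f b, which telescopes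
   through y and is bounded termwise by Cauchy-Schwarz. *)

From mathcomp Require Import all_boot all_order all_algebra.
From mathcomp Require Import complex.
From mathcomp Require Import boolp classical_sets reals topology normedtype derive.
From mathcomp Require Import ring lra.
Import Order.TTheory GRing.Theory Num.Theory.
Import numFieldTopology.Exports numFieldNormedType.Exports.
Local Open Scope ring_scope.

Set Implicit Arguments.
Unset Strict Implicit.
Unset Printing Implicit Defensive.

Section RealInnerProduct.
Context (R : rcfType) (V : zmodType) (scale : R -> V -> V) (ip : V -> V -> R).

Record inner_product : Prop := InnerProduct {
  ip_sym : forall a b, ip a b = ip b a;
  ip_additive : forall a b c, ip (a - b) c = ip a c - ip b c;
  ip_scalable : forall t a b, ip (scale t a) b = t * ip a b;
  ip_nonneg : forall a, 0 <= ip a a;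
  ip_definite : forall a, ip a a = 0 -> a = 0 }.

Definition nrm a := Num.sqrt (ip a a).

Hypothesis hip : inner_product.

Let ipC := ip_sym hip.
Let ipBl := ip_additive hip.
Let ipZl := ip_scalable hip.
Let ip_ge0 := ip_nonneg hip.

Let ipBr a b c : ip a (b - c) = ip a b - ip a c.
Proof. by rewrite ipC ipBl !(ipC a). Qed.

Let ip0l a : ip 0 a = 0.
Proof. by rewrite -(subrr 0) ipBl subrr. Qed.

Let ipNl a b : ip (- a) b = - ip a b.
Proof. by rewrite -sub0r ipBl ip0l sub0r. Qed.

Let ipDl a b c : ip (a + b) c = ip a c + ip b c.
Proof. by rewrite -{1}(opprK b) ipBl ipNl opprK. Qed.

Lemma ipNr a b : ip a (- b) = - ip a b.
Proof. by rewrite ipC ipNl ipC. Qed.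

Let ipDr a b c : ip a (b + c) = ip a b + ip a c.
Proof. by rewrite ipC ipDl !(ipC _ a). Qed.

Let ipZr t a b : ip a (scale t b) = t * ip a b.
Proof. by rewrite ipC ipZl ipC. Qed.

Lemma nrm_ge0 a : 0 <= nrm a.
Proof. exact: sqrtr_ge0. Qed.

Lemma sqr_nrm a : nrm a ^+ 2 = ip a a.
Proof. exact/sqr_sqrtr/ip_ge0. Qed.

Lemma nrm_eq0 a : nrm a = 0 -> a = 0.
Proof. by move=> a0; apply: (ip_definite hip); rewrite -sqr_nrm a0 expr0n. Qed.

Lemma nrm0 : nrm 0 = 0.
Proof. by rewrite /nrm ip0l sqrtr0. Qed.

Lemma nrmN a : nrm (- a) = nrm a.
Proof. by rewrite /nrm ipNl ipNr opprK. Qed.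

Lemma sqr_nrmB a b : nrm (a - b) ^+ 2 = nrm a ^+ 2 - 2 * ip a b + nrm b ^+ 2.
Proof. by rewrite !sqr_nrm ipBl !ipBr (ipC b a); ring. Qed.

Lemma sqr_nrmD a b : nrm (a + b) ^+ 2 = nrm a ^+ 2 + 2 * ip a b + nrm b ^+ 2.
Proof. by rewrite !sqr_nrm ipDl !ipDr (ipC b a); ring. Qed.

(* Cauchy-Schwarz and the reflection of [householder_align] both come from this vector. *)
Lemma sqr_nrm_cross u v (p := nrm u) (q := nrm v) :
  nrm (scale q u - scale p v) ^+ 2 = 2 * (p * q) * (p * q - ip u v).
Proof.
by rewrite sqr_nrmB !sqr_nrm !ipZl !ipZr -!sqr_nrm -/p -/q; ring.
Qed.

Lemma ip_le_nrm u v : ip u v <= nrm u * nrm v.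
Proof.
have [/eqP|pq_neq0] := eqVneq (nrm u * nrm v) 0.
  rewrite mulf_eq0 => /orP[] /eqP pq0; move/nrm_eq0: (pq0) => ->.
    by rewrite ip0l nrm0 mul0r.
  by rewrite ipC ip0l nrm0 mulr0.
have pq_gt0 : 0 < nrm u * nrm v by rewrite lt_def pq_neq0 mulr_ge0 ?nrm_ge0.
have := sqr_ge0 (nrm (scale (nrm v) u - scale (nrm u) v)).
by rewrite sqr_nrm_cross -mulrA !pmulr_rge0 // subr_ge0.
Qed.

Lemma ler_nrmD a b : nrm (a + b) <= nrm a + nrm b.
Proof.
rewrite -ler_sqr ?nnegrE ?addr_ge0 ?nrm_ge0 // sqr_nrmD sqrrD.
by have := ip_le_nrm a b; nra.
Qed.

Definition householder c e w := w - scale (c * ip w e) e.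

Lemma ip_householder c e a b :
  ip a (householder c e b) = ip a b - c * ip a e * ip b e.
Proof. by rewrite ipBr ipZr; ring. Qed.

(* The condition says [c = 0] (identity) or [c = 2 / ip e e] (reflection across e^perp). *)
Lemma nrm_householder c e w :
  c * (c * ip e e - 2) = 0 -> nrm (householder c e w) = nrm w.
Proof.
move=> hc; rewrite /nrm; congr Num.sqrt.
rewrite /householder ipBl !ip_householder !ipZl.
by rewrite (ipC e w) -[RHS]addr0 -(mulr0 (ip w e ^+ 2)) -hc; ring.
Qed.

Lemma householder_align u v : exists c e,
  c * (c * ip e e - 2) = 0 /\ nrm u * nrm v = ip u (householder c e v).
Proof.
set p := nrm u; set q := nrm v; set s := ip u v.
set e := scale q u - scale p v.
have ee : ip e e = 2 * (p * q) * (p * q - s) by rewrite -sqr_nrm sqr_nrm_cross.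
have ue : ip u e = p * (p * q - s).
  by rewrite ipBr !ipZr -sqr_nrm -/p -/s; ring.
have ve : ip v e = q * (s - p * q).
  by rewrite ipBr !ipZr (ipC v u) -sqr_nrm -/q -/s; ring.
have [ee0|ee_neq0] := eqVneq (ip e e) 0.
  exists 0, e; split; first by rewrite mul0r.
  rewrite ip_householder mul0r mul0r subr0 -/s.
  move/eqP: ee0; rewrite ee !mulf_eq0 pnatr_eq0 subr_eq0 /= => /orP[/orP[]|] /eqP //.
    by move=> p0; rewrite p0 mul0r /s (nrm_eq0 p0) ip0l.
  by move=> q0; rewrite q0 mulr0 /s (nrm_eq0 q0) ipC ip0l.
exists (2 / ip e e), e; split; first by rewrite divfK // subrr mulr0.
move: ee_neq0; rewrite ee !mulf_eq0 !negb_or => /andP[/andP[_ /andP[p0 q0]] d0].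
by rewrite ip_householder -/s ue ve; field; rewrite p0 q0 d0.
Qed.

Lemma ptolemy x y z :
  nrm (x - z) * nrm (x + z) <= nrm (x - y) * nrm (x + y) + nrm (y - z) * nrm (y + z).
Proof.
have [c [e [hc ->]]] := householder_align (x - z) (x + z).
pose f a := ip a a - c * ip a e ^+ 2.
have ip_BD a b : ip (a - b) (householder c e (a + b)) = f a - f b.
  by rewrite ip_householder ipBl !ipDr !ipBl !ipDl (ipC b a); rewrite /f; ring.
have le_BD a b : f a - f b <= nrm (a - b) * nrm (a + b).
  by rewrite -ip_BD; apply: le_trans (ip_le_nrm _ _) _; rewrite nrm_householder.
rewrite ip_BD (_ : f x - f z = (f x - f y) + (f y - f z)); last by ring.
exact: lerD.
Qed.

End RealInnerProduct.

Section FrobeniusInnerProduct.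
Context {R : realType} {m k : nat}.
Local Notation Re := (@complex.Re R).
Local Notation Im := (@complex.Im R).
Implicit Types a b c : 'M[R[i]]_(m, k).

Definition mxip a b : R :=
  \sum_i \sum_j (Re (a i j) * Re (b i j) + Im (a i j) * Im (b i j)).

Definition mxscale (t : R) a := t%:C%C *: a.

Lemma mxip_inner : inner_product mxscale mxip.
Proof.
have sqr_ge0 (z : R[i]) : 0 <= Re z * Re z + Im z * Im z.
  by rewrite -!expr2 addr_ge0 ?sqr_ge0.
have row_ge0 a i : 0 <= \sum_j (Re (a i j) * Re (a i j) + Im (a i j) * Im (a i j)).
  exact: sumr_ge0.
split.
- move=> a b; apply: eq_bigr => i _; apply: eq_bigr => j _.
  by rewrite mulrC [Im _ * _]mulrC.
- move=> a b c; rewrite /mxip -sumrB; apply: eq_bigr => i _.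
  rewrite -sumrB; apply: eq_bigr => j _.
  by rewrite !mxE !raddfB /=; ring.
- move=> t a b; rewrite /mxip mulr_sumr; apply: eq_bigr => i _.
  rewrite mulr_sumr; apply: eq_bigr => j _.
  by rewrite !mxE; case: (a i j) => x y /=; ring.
- by move=> a; apply: sumr_ge0 => i _; apply: row_ge0.
- move=> a a0; apply/matrixP => i j; rewrite mxE.
  have row0 := @psumr_eq0P _ _ _ _ (fun i _ => row_ge0 a i) a0 i isT.
  have := @psumr_eq0P _ _ _ _ (fun j _ => sqr_ge0 (a i j)) row0 j isT.
  by case: (a i j) => x y /= xy0; congr Complex; nra.
Qed.

Lemma frobE a : frob a = nrm mxip a.
Proof.
by congr Num.sqrt; apply: eq_bigr => i _; apply: eq_bigr => j _; rewrite !expr2.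
Qed.

End FrobeniusInnerProduct.

Section Unitary.
Context (R : realType).
Local Notation Re := (@complex.Re R).
Local Notation Im := (@complex.Im R).

Lemma adjmxM m k p (a : 'M[R[i]]_(m, k)) (b : 'M[R[i]]_(k, p)) :
  adjmx (a *m b) = adjmx b *m adjmx a.
Proof. by rewrite /adjmx map_mxM trmx_mul. Qed.

Lemma adjmxK m k (a : 'M[R[i]]_(m, k)) : adjmx (adjmx a) = a.
Proof. by apply/matrixP => i j; rewrite !mxE conjcK. Qed.

Lemma unitary1 r : unitary (1%:M : 'M[R[i]]_r).
Proof. by rewrite /unitary /adjmx map_mx1 trmx1 mulmx1. Qed.

Lemma unitaryM r (U V : 'M[R[i]]_r) : unitary U -> unitary V -> unitary (U *m V).
Proof.
move=> [U1 U2] [V1 V2]; rewrite /unitary adjmxM; split.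
  by rewrite mulmxA -(mulmxA _ _ U) U1 mulmx1 V1.
by rewrite mulmxA -(mulmxA U) V2 mulmx1 U2.
Qed.

Lemma unitary_adj r (U : 'M[R[i]]_r) : unitary U -> unitary (adjmx U).
Proof. by move=> [U1 U2]; split; rewrite adjmxK. Qed.

Lemma unitaryN r (U : 'M[R[i]]_r) : unitary U -> unitary (- U).
Proof.
have adjN : adjmx (- U) = - adjmx U by rewrite /adjmx map_mxN linearN.
by move=> [U1 U2]; split; rewrite adjN ?mulNmx ?mulmxN opprK.
Qed.

Lemma mxip_tr m k (a b : 'M[R[i]]_(m, k)) : mxip a b = Re (\tr (adjmx a *m b)).
Proof.
rewrite /mxtrace raddf_sum /mxip exchange_big; apply: eq_bigr => j _.
rewrite !mxE raddf_sum; apply: eq_bigr => i _; rewrite !mxE.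
by case: (a i j) => x y; case: (b i j) => x' y' /=; ring.
Qed.

Lemma mxip_mulU m r (a b : 'M[R[i]]_(m, r)) U :
  unitary U -> mxip (a *m U) (b *m U) = mxip a b.
Proof.
move=> [_ U2]; rewrite !mxip_tr adjmxM mxtrace_mulC -!mulmxA (mulmxA U) U2 mul1mx.
by rewrite mxtrace_mulC.
Qed.

Lemma frob_mulU m r (a : 'M[R[i]]_(m, r)) U : unitary U -> frob (a *m U) = frob a.
Proof. by move=> hU; rewrite !frobE /nrm mxip_mulU. Qed.

End Unitary.

Section ComplexContinuity.
Context (R : realType) (T : topologicalType).
Local Notation Re := (@complex.Re R).
Local Notation Im := (@complex.Im R).
Local Open Scope classical_set_scope.

Let ReM (z w : R[i]) : Re (z * w) = Re z * Re w - Im z * Im w.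
Proof. by case: z; case: w. Qed.

Let ImM (z w : R[i]) : Im (z * w) = Re z * Im w + Im z * Re w.
Proof. by case: z => a b; case: w => c d /=; ring. Qed.

Let ReJ (z : R[i]) : Re z^*%C = Re z.
Proof. by case: z. Qed.

Let ImJ (z : R[i]) : Im z^*%C = - Im z.
Proof. by case: z. Qed.

Definition ccontinuous (f : T -> R[i]) :=
  continuous (fun t => Re (f t)) /\ continuous (fun t => Im (f t)).

Lemma ccontinuous_cst c : ccontinuous (fun=> c).
Proof. by split; apply: cst_continuous. Qed.

Lemma ccontinuousD f g :
  ccontinuous f -> ccontinuous g -> ccontinuous (fun t => f t + g t).
Proof.
move=> [f1 f2] [g1 g2]; split.
  by under eq_fun do rewrite raddfD; move=> t; exact: (continuousD (f1 t) (g1 t)).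
by under eq_fun do rewrite raddfD; move=> t; exact: (continuousD (f2 t) (g2 t)).
Qed.

Lemma ccontinuousM f g :
  ccontinuous f -> ccontinuous g -> ccontinuous (fun t => f t * g t).
Proof.
move=> [f1 f2] [g1 g2]; split.
  under eq_fun do rewrite ReM.
  by move=> t; exact: (continuousB (continuousM (f1 t) (g1 t)) (continuousM (f2 t) (g2 t))).
under eq_fun do rewrite ImM.
by move=> t; exact: (continuousD (continuousM (f1 t) (g2 t)) (continuousM (f2 t) (g1 t))).
Qed.

Lemma ccontinuousJ f : ccontinuous f -> ccontinuous (fun t => (f t)^*%C).
Proof.
move=> [f1 f2]; split.
  by under eq_fun do rewrite ReJ.
under eq_fun do rewrite ImJ.
by move=> t; exact: (continuousN (f2 t)).
Qed.

Lemma ccontinuous_sum (I : Type) (s : seq I) (F : I -> T -> R[i]) :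
  (forall i, ccontinuous (F i)) -> ccontinuous (fun t => \sum_(i <- s) F i t).
Proof.
move=> cF; elim: s => [|i s IHs].
  by under eq_fun do rewrite big_nil; apply: ccontinuous_cst.
by under eq_fun do rewrite big_cons; apply: ccontinuousD.
Qed.

Definition mx_ccontinuous p q (F : T -> 'M[R[i]]_(p, q)) :=
  forall i j, ccontinuous (fun t => F t i j).

Lemma mx_ccontinuous_cst p q (A : 'M[R[i]]_(p, q)) : mx_ccontinuous (fun=> A).
Proof. by move=> i j; apply: ccontinuous_cst. Qed.

Lemma mx_ccontinuousM p q s (F : T -> 'M[R[i]]_(p, q)) (G : T -> 'M[R[i]]_(q, s)) :
  mx_ccontinuous F -> mx_ccontinuous G -> mx_ccontinuous (fun t => F t *m G t).
Proof.
move=> cF cG i j; under eq_fun do rewrite mxE.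
by apply: ccontinuous_sum => k; apply: ccontinuousM.
Qed.

Lemma mx_ccontinuous_adj p q (F : T -> 'M[R[i]]_(p, q)) :
  mx_ccontinuous F -> mx_ccontinuous (fun t => adjmx (F t)).
Proof. by move=> cF i j; under eq_fun do rewrite !mxE; apply: ccontinuousJ. Qed.

Lemma ccontinuous_tr p (F : T -> 'M[R[i]]_p) :
  mx_ccontinuous F -> ccontinuous (fun t => \tr (F t)).
Proof. by move=> cF; apply: ccontinuous_sum => i; apply: cF. Qed.

Lemma closed_mx_ccontinuous_eq p q (F : T -> 'M[R[i]]_(p, q)) A :
  mx_ccontinuous F -> closed [set t | F t = A].
Proof.
move=> cF.
have -> : [set t | F t = A] = \bigcap_(ij in [set: 'I_p * 'I_q])
    ((fun t => Re (F t ij.1 ij.2)) @^-1` [set Re (A ij.1 ij.2)] `&`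
     (fun t => Im (F t ij.1 ij.2)) @^-1` [set Im (A ij.1 ij.2)]).
  apply/seteqP; split => t /=; first by move=> FA ij _ /=; rewrite FA.
  move=> FA; apply/matrixP => i j; have [/= FAre FAim] := FA (i, j) I.
  by apply/eqP; rewrite eq_complex FAre FAim !eqxx.
apply: closed_bigI => ij _; have [cRe cIm] := cF ij.1 ij.2.
apply: closedI.
  by apply: preimage_closed => [t _|]; [apply: cRe | apply: closed_eq].
by apply: preimage_closed => [t _|]; [apply: cIm | apply: closed_eq].
Qed.

End ComplexContinuity.

Section UnitaryCompact.
Context (R : realType) (r : nat).
Local Notation Re := (@complex.Re R).
Local Notation Im := (@complex.Im R).
Local Notation N := (r * r + r * r)%N.
Local Open Scope classical_set_scope.

Definition mx_of_rV (v : 'rV[R]_N) : 'M[R[i]]_r :=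
  \matrix_(i, j)
    Complex (v 0 (lshift _ (mxvec_index i j))) (v 0 (rshift _ (mxvec_index i j))).

Definition rV_of_mx (U : 'M[R[i]]_r) : 'rV[R]_N :=
  row_mx (mxvec (map_mx Re U)) (mxvec (map_mx Im U)).

Lemma rV_of_mxK : cancel rV_of_mx mx_of_rV.
Proof.
move=> U; apply/matrixP => i j.
by rewrite mxE row_mxEl row_mxEr !mxvecE !mxE; case: (U i j).
Qed.

Lemma mx_ccontinuous_mx_of_rV : mx_ccontinuous mx_of_rV.
Proof. by move=> i j; split; under eq_fun do rewrite mxE; apply: coord_continuous. Qed.

Lemma unitary_entry_le1 (U : 'M[R[i]]_r) :
  unitary U -> forall i j, Re (U i j) ^+ 2 + Im (U i j) ^+ 2 <= 1.
Proof.
move=> [UU _] i j; have /(congr1 (fun A : 'M[R[i]]_r => Re (A j j))) := UU.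
rewrite !mxE eqxx raddf_sum (bigD1 i) //= => <-.
rewrite ler_wpDr ?sumr_ge0 // => [k _|]; rewrite !mxE; case: (U _ _) => a b /=.
  by rewrite mulNr opprK -!expr2 addr_ge0 ?sqr_ge0.
by rewrite mulNr opprK -!expr2.
Qed.

Lemma compact_unitary : compact [set v : 'rV[R]_N | unitary (mx_of_rV v)].
Proof.
apply: bounded_closed_compact.
  exists 1; split; rewrite ?num_real // => M M1 v /= Uv.
  apply: le_trans (ltW M1); rewrite (_ : `|v| = mx_norm v) // mx_normrE.
  apply/bigmax_leP; split => // -[a b] _ /=; rewrite ord1.
  rewrite -(expr_le1 (n := 2)) // real_normK ?num_real //.
  case: (split_ordP b) => l ->; case: (mxvec_indexP l) => i j;
    by have := unitary_entry_le1 Uv i j; rewrite !mxE /=; nra.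
have -> : [set v | unitary (mx_of_rV v)] =
    [set v | adjmx (mx_of_rV v) *m mx_of_rV v = 1%:M].
  by apply/seteqP; split => v /=; [case | split => //; apply: mulmx1C].
by apply: closed_mx_ccontinuous_eq; apply: mx_ccontinuousM;
  [apply: mx_ccontinuous_adj|]; apply: mx_ccontinuous_mx_of_rV.
Qed.

Lemma unitary_argmax (f : 'M[R[i]]_r -> R) : continuous (f \o mx_of_rV) ->
  exists2 U0, unitary U0 & forall U, unitary U -> f U <= f U0.
Proof.
move=> cf; have ne : [set v : 'rV[R]_N | unitary (mx_of_rV v)] !=set0.
  by exists (rV_of_mx 1%:M); rewrite /= rV_of_mxK; apply: unitary1.
have [v Uv vmax] := EVT_max_rV ne compact_unitary (continuous_subspaceT cf).
exists (mx_of_rV v); first by rewrite inE in Uv.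
by move=> U UU; rewrite -[U]rV_of_mxK; apply: vmax; rewrite inE /= rV_of_mxK.
Qed.

End UnitaryCompact.

Lemma mxip_argmax (R : realType) n r (x y : 'M[R[i]]_(n, r)) :
  exists2 U0, unitary U0 & forall U, unitary U -> mxip x (y *m U) <= mxip x (y *m U0).
Proof.
apply: unitary_argmax.
rewrite (_ : _ \o _ = fun v => complex.Re (\tr (adjmx x *m (y *m mx_of_rV v)))); last first.
  by apply/funext => v; rewrite /= mxip_tr.
apply: (proj1 (ccontinuous_tr _)).
apply: mx_ccontinuousM; first exact: mx_ccontinuous_cst.
by apply: mx_ccontinuousM; [exact: mx_ccontinuous_cst | exact: mx_ccontinuous_mx_of_rV].
Qed.

Section OrbitInfimum.
Context (R : realType) (n r : nat).
Local Notation M := 'M[R[i]]_(n, r).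
Local Open Scope classical_set_scope.

Variable phi : M -> M -> R.

(* [Dist] and [dist] are, by definition, [orbit_inf] of the costs [frob (a - b)]
   and [frob (a - b) * frob (a + b)]. *)
Definition orbit_inf x y :=
  inf [set phi x (y *m U) | U in [set U : 'M[R[i]]_r | unitary U]].

Record invariant_cost : Prop := InvariantCost {
  cost_self : forall a, phi a a = 0;
  cost_sym : forall a b, phi a b = phi b a;
  cost_mulU : forall a b U, unitary U -> phi (a *m U) (b *m U) = phi a b;
  cost_triangle : forall a b c, phi a c <= phi a b + phi b c;
  cost_eq0 : forall a b, phi a b = 0 -> uequiv a b;
  cost_argmin : forall x y, exists2 U0, unitary U0 &
    forall U, unitary U -> phi x (y *m U0) <= phi x (y *m U) }.

Hypothesis hphi : invariant_cost.

Let cost_ge0 a b : 0 <= phi a b.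
Proof.
have := cost_triangle hphi a b a.
by rewrite cost_self // (cost_sym hphi b a); lra.
Qed.

Lemma orbit_inf_le x y U : unitary U -> orbit_inf x y <= phi x (y *m U).
Proof.
move=> hU; apply: ge_inf; last by exists U.
by exists 0 => _ [V _ <-]; apply: cost_ge0.
Qed.

Lemma orbit_inf_attained x y :
  exists U0, unitary U0 /\ orbit_inf x y = phi x (y *m U0).
Proof.
have [U0 hU0 U0min] := cost_argmin hphi x y; exists U0; split => //.
apply/le_anti; rewrite orbit_inf_le //=.
by apply: lb_le_inf; [exists (phi x (y *m U0)), U0 | move=> _ [U hU <-]; apply: U0min].
Qed.

Lemma orbit_inf_ge0 x y : 0 <= orbit_inf x y.
Proof. by have [U0 [_ ->]] := orbit_inf_attained x y; apply: cost_ge0. Qed.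

Lemma orbit_inf_mulUr x y Q : unitary Q -> orbit_inf x (y *m Q) = orbit_inf x y.
Proof.
move=> hQ; apply/le_anti/andP; split.
  have [U0 [hU0 ->]] := orbit_inf_attained x y.
  have -> : y *m U0 = y *m Q *m (adjmx Q *m U0).
    by rewrite -mulmxA (mulmxA Q) (proj2 hQ) mul1mx.
  by apply: orbit_inf_le; apply: unitaryM => //; apply: unitary_adj.
have [U1 [hU1 ->]] := orbit_inf_attained x (y *m Q).
by rewrite -mulmxA; apply: orbit_inf_le; apply: unitaryM.
Qed.

Lemma orbit_infC x y : orbit_inf x y = orbit_inf y x.
Proof.
suff le_sym a b : orbit_inf a b <= orbit_inf b a by apply/le_anti; rewrite !le_sym.
have [U0 [hU0 ->]] := orbit_inf_attained b a.
apply: le_trans (orbit_inf_le a b (unitary_adj hU0)) _.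
by rewrite -(cost_mulU hphi _ _ hU0) -mulmxA (proj1 hU0) mulmx1 (cost_sym hphi).
Qed.

Lemma orbit_inf_triangle x y z : orbit_inf x z <= orbit_inf x y + orbit_inf y z.
Proof.
have [U1 [hU1 ->]] := orbit_inf_attained x y.
have [U2 [hU2 ->]] := orbit_inf_attained y z.
apply: le_trans (orbit_inf_le x z (unitaryM hU2 hU1)) _.
rewrite -(cost_mulU hphi y (z *m U2) hU1) mulmxA.
exact: cost_triangle.
Qed.

Lemma orbit_inf_eq0 x y : orbit_inf x y = 0 <-> uequiv x y.
Proof.
split.
  have [U0 [hU0 ->]] := orbit_inf_attained x y.
  move=> /(cost_eq0 hphi) [V [hV ->]].
  by exists (U0 *m V); split; [apply: unitaryM | rewrite mulmxA].
move=> [U [hU ->]]; apply/le_anti; rewrite orbit_inf_ge0 andbT.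
by rewrite -(cost_self hphi (y *m U)); apply: orbit_inf_le.
Qed.

Lemma orbit_inf_metric : descends_to_metric (@uequiv R n r) orbit_inf.
Proof.
split.
- move=> x x' y y' [P [hP ->]] [Q [hQ ->]].
  by rewrite orbit_inf_mulUr // orbit_infC orbit_inf_mulUr // orbit_infC.
- exact: orbit_inf_ge0.
- exact: orbit_inf_eq0.
- exact: orbit_infC.
- exact: orbit_inf_triangle.
Qed.

End OrbitInfimum.

Section FrobeniusCosts.
Context (R : realType) (n r : nat).
Implicit Types a b c x y : 'M[R[i]]_(n, r).

Lemma sqr_frobB_mulU x y U : unitary U ->
  frob (x - y *m U) ^+ 2 = frob x ^+ 2 + frob y ^+ 2 - 2 * mxip x (y *m U).
Proof.
by move=> hU; rewrite -(frob_mulU y hU) !frobE (sqr_nrmB mxip_inner); ring.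
Qed.

Lemma sqr_frobD_mulU x y U : unitary U ->
  frob (x + y *m U) ^+ 2 = frob x ^+ 2 + frob y ^+ 2 + 2 * mxip x (y *m U).
Proof.
by move=> hU; rewrite -(frob_mulU y hU) !frobE (sqr_nrmD mxip_inner); ring.
Qed.

Lemma frobB_invariant_cost : invariant_cost (fun a b : 'M[R[i]]_(n, r) => frob (a - b)).
Proof.
split.
- by move=> a; rewrite subrr frobE (nrm0 mxip_inner).
- by move=> a b; rewrite !frobE -(nrmN mxip_inner) opprB.
- by move=> a b U hU; rewrite -mulmxBl frob_mulU.
- by move=> a b c; rewrite !frobE -(subrKA b a (- c)) (ler_nrmD mxip_inner).
- move=> a b; rewrite frobE => /(nrm_eq0 mxip_inner)/eqP; rewrite subr_eq0 => /eqP ->.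
  by exists 1%:M; rewrite mulmx1; split => //; apply: unitary1.
- move=> x y; have [U0 hU0 U0max] := mxip_argmax x y; exists U0 => // U hU.
  rewrite -ler_sqr ?nnegrE ?frobE ?nrm_ge0 // -!frobE !sqr_frobB_mulU //.
  by have := U0max U hU; lra.
Qed.

Lemma frobBD_invariant_cost :
  invariant_cost (fun a b : 'M[R[i]]_(n, r) => frob (a - b) * frob (a + b)).
Proof.
split.
- by move=> a; rewrite subrr frobE (nrm0 mxip_inner) mul0r.
- by move=> a b; rewrite [b + a]addrC -opprB !frobE (nrmN mxip_inner).
- by move=> a b U hU; rewrite -mulmxBl -mulmxDl !frob_mulU.
- by move=> a b c; rewrite !frobE (ptolemy mxip_inner).
- move=> a b /eqP; rewrite mulf_eq0 !frobE => /orP[] /eqP/(nrm_eq0 mxip_inner)/eqP.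
    rewrite subr_eq0 => /eqP ->.
    by exists 1%:M; rewrite mulmx1; split => //; apply: unitary1.
  rewrite addr_eq0 => /eqP ->.
  by exists (- 1%:M); rewrite mulmxN mulmx1; split => //; apply/unitaryN/unitary1.
- move=> x y; have [U0 hU0 U0max] := mxip_argmax x y; exists U0 => // U hU.
  rewrite -ler_sqr ?nnegrE ?mulr_ge0 ?frobE ?nrm_ge0 // -!frobE !exprMn.
  rewrite !sqr_frobB_mulU // !sqr_frobD_mulU //.
  have := U0max U hU; have := U0max _ (unitaryN hU).
  rewrite mulmxN (ipNr mxip_inner); nra.
Qed.

End FrobeniusCosts.

Unset Implicit Arguments.

Theorem proposition2p3 (R : realType) (n r : nat) :
  (* the minima defining D and d are attained *)
  (forall x y : 'M[R[i]]_(n, r),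
     exists U : 'M[R[i]]_r, unitary U /\ Dist x y = frob (x - y *m U)) /\
  (forall x y : 'M[R[i]]_(n, r),
     exists U : 'M[R[i]]_r, unitary U /\
       dist x y = frob (x - y *m U) * frob (x + y *m U)) /\
  (* and D, d descend to metrics on C^{n x r} / U(r) *)
  descends_to_metric (@uequiv R n r) (@Dist R n r) /\
  descends_to_metric (@uequiv R n r) (@dist R n r).
Proof.
have hD := @frobB_invariant_cost R n r.
have hd := @frobBD_invariant_cost R n r.
split; [exact: orbit_inf_attained hD | split; [exact: orbit_inf_attained hd |]].
by split; [exact: orbit_inf_metric hD | exact: orbit_inf_metric hd].
Qed.
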